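(* Let $\alpha=\frac{1+\sqrt5}{2}$. For $a\in\mathbb{C}$ with $a\neq 0$ and $|a|<1$, consider the Blaschke product $B_a(z)=z\,\frac{z-a}{1-\overline{a}z}$. There are infinitely many values of $a$ (with $a\neq0$, $|a|<1$) such that there exists a line segment $[z_1,z_2]$ with endpoints $z_1,z_2$ on the unit circle $\partial\mathbb{D}$ which is divided by $a$ in the golden ratio. Furthermore, for a fixed such $a$, the number of line segments with endpoints on the unit circle that are divided by $a$ in the golden ratio is at most two.
   Context: $\mathbb{D}$ denotes the open unit disc and $\partial\mathbb{D}$ the unit circle. The golden ratio is $\alpha=\frac{1+\sqrt5}{2}$, the positive root of $x^2-x-1=0$. A point $a$ on a line segment $[z_1,z_2]$ divides it in the golden ratio if the ratio of the length of the longer part to the length of the shorter part equals $\alpha$, e.g. $\frac{|z_2-a|}{|z_1-a|}=\alpha$. (For any chord $[z_1,z_2]$ of the unit circle through the nonzero zero $a$ of $B_a$ one has $B_a(z_1)=B_a(z_2)$.) *)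

From Stdlib Require Import Reals Lra.
From Coquelicot Require Import Coquelicot.
Open Scope R_scope.

Definition golden : R := (1 + sqrt 5) / 2.

Definition on_unit_circle (z : C) : Prop := Cmod z = 1.

Definition on_segment (a z1 z2 : C) : Prop :=
  exists t : R, 0 <= t <= 1 /\ a = Cplus z1 (Cmult (RtoC t) (Cminus z2 z1)).

Definition divides_golden (a z1 z2 : C) : Prop :=
  on_segment a z1 z2 /\
  (Cmod (Cminus z2 a) / Cmod (Cminus z1 a) = golden \/
   Cmod (Cminus z1 a) / Cmod (Cminus z2 a) = golden).

Definition golden_chord (a z1 z2 : C) : Prop :=
  on_unit_circle z1 /\ on_unit_circle z2 /\ divides_golden a z1 z2.

Definition same_segment (z1 z2 w1 w2 : C) : Prop :=
  (z1 = w1 /\ z2 = w2) \/ (z1 = w2 /\ z2 = w1).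

(* The Blaschke product B_a(z) = z (z - a) / (1 - conj(a) z) (context only). *)
Definition blaschke (a z : C) : C :=
  Cmult z (Cdiv (Cminus z a) (Cminus (RtoC 1) (Cmult (Cconj a) z))).

Definition admissible (a : C) : Prop := a <> RtoC 0 /\ Cmod a < 1.

From Stdlib Require Import Reals List Lra Psatz.
From Coquelicot Require Import Coquelicot.
Open Scope R_scope.

(* Write s = 1/(1+golden).  A point a divides a chord of the unit circle in the
   golden ratio iff a = p + s (q - p), where p is the endpoint nearer to a.
   Expanding |q|^2 = 1 then fixes Re (conj a * p) in terms of |a|, and
   |conj a * p| = |a| fixes Im (conj a * p) up to sign; since a <> 0, the value
   conj a * p determines p, hence q.  So a lies on at most two such chords.
   Conversely p + s (q - p) lies strictly inside the disc for every chord [p, q],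
   and horizontal chords at different heights give infinitely many such points. *)

Lemma exists_not_In_open_interval (l : list R) (lo hi : R) :
  lo < hi -> exists y, lo < y < hi /\ ~ In y l.
Proof.
  revert lo hi; induction l as [|b l IH]; intros lo hi Hlt.
  - exists ((lo + hi) / 2); split; [lra | intros []].
  - destruct (Rlt_le_dec lo b) as [Hb | Hb].
    + destruct (IH lo (Rmin hi b)) as (y & Hy & Hny).
      { apply Rmin_glb_lt; assumption. }
      pose proof (Rmin_l hi b); pose proof (Rmin_r hi b).
      exists y; split; [lra | intros [-> | Hin]; [lra | exact (Hny Hin)]].
    + destruct (IH lo hi Hlt) as (y & Hy & Hny).
      exists y; split; [lra | intros [-> | Hin]; [lra | exact (Hny Hin)]].
Qed.

Lemma pow2_eq_pigeonhole (x y z : R) : x ^ 2 = y ^ 2 -> x ^ 2 = z ^ 2 -> x = y \/ x = z \/ y = z.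
Proof.
  rewrite <- !Rsqr_pow2. intros Hy%Rsqr_eq Hz%Rsqr_eq. lra.
Qed.

Lemma segment_param_of_ratio (t r : R) : t <> 0 -> (1 - t) / t = r -> t = 1 / (1 + r).
Proof. intros Ht <-. field. split; [exact Ht | lra]. Qed.

Lemma Cmod_scal_nonneg (t : R) (z : C) : 0 <= t -> Cmod (t * z)%C = t * Cmod z.
Proof. intros Ht. rewrite Cmod_mult, Cmod_R, Rabs_pos_eq; auto. Qed.

Lemma Cmod_sub_ge (u v : C) : Cmod u - Cmod v <= Cmod (u - v)%C.
Proof.
  pose proof (Cmod_triangle (u - v) v) as H.
  replace (u - v + v)%C with u in H by ring. lra.
Qed.

Lemma Cmod_sub_gt_0 (u v : C) : u <> v -> 0 < Cmod (u - v)%C.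
Proof.
  intros Hne. apply Cmod_gt_0. intros E. apply Hne.
  replace u with (u - v + v)%C by ring. rewrite E. ring.
Qed.

Lemma on_unit_circle_iff (z : C) : on_unit_circle z <-> Re z ^ 2 + Im z ^ 2 = 1.
Proof.
  unfold on_unit_circle. split; intros H.
  - rewrite <- Cmod2_alt, H. ring.
  - unfold Cmod. change (sqrt (Re z ^ 2 + Im z ^ 2) = 1). rewrite H. exact sqrt_1.
Qed.

Lemma Cmod_segment_point_sq (z1 z2 : C) (t : R) :
  Cmod (z1 + t * (z2 - z1))%C ^ 2
  = (1 - t) * Cmod z1 ^ 2 + t * Cmod z2 ^ 2 - t * (1 - t) * Cmod (z2 - z1)%C ^ 2.
Proof. rewrite !Cmod2_alt. destruct z1, z2. simpl. ring. Qed.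

Lemma segment_point_dist (z1 z2 : C) (t : R) : 0 <= t <= 1 ->
  Cmod (z1 - (z1 + t * (z2 - z1)))%C = t * Cmod (z2 - z1)%C /\
  Cmod (z2 - (z1 + t * (z2 - z1)))%C = (1 - t) * Cmod (z2 - z1)%C.
Proof.
  intros Ht. split.
  - replace (z1 - (z1 + t * (z2 - z1)))%C with (- (t * (z2 - z1)))%C by ring.
    rewrite Cmod_opp. apply Cmod_scal_nonneg. lra.
  - replace (z2 - (z1 + t * (z2 - z1)))%C with ((1 - t)%R * (z2 - z1))%C
      by (rewrite RtoC_minus; ring).
    apply Cmod_scal_nonneg. lra.
Qed.

Lemma segment_point_lt_1 (z1 z2 : C) (t : R) :
  on_unit_circle z1 -> on_unit_circle z2 -> z1 <> z2 -> 0 < t < 1 ->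
  Cmod (z1 + t * (z2 - z1))%C < 1.
Proof.
  unfold on_unit_circle. intros H1 H2 Hne Ht.
  pose proof (Cmod_sub_gt_0 z2 z1 (not_eq_sym Hne)) as Hd.
  pose proof (Cmod_segment_point_sq z1 z2 t) as E.
  rewrite H1, H2 in E.
  pose proof (Cmod_ge_0 (z1 + t * (z2 - z1))%C).
  assert (0 < t * (1 - t) * Cmod (z2 - z1)%C ^ 2).
  { apply Rmult_lt_0_compat; [apply Rmult_lt_0_compat; lra | apply pow_lt; lra]. }
  nra.
Qed.

Lemma same_segment_trans (z1 z2 w1 w2 p q : C) :
  same_segment z1 z2 p q -> same_segment w1 w2 p q -> same_segment z1 z2 w1 w2.
Proof. unfold same_segment. intros [[-> ->] | [-> ->]] [[-> ->] | [-> ->]]; tauto. Qed.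

Definition chord_split (s : R) (a p q : C) : Prop :=
  on_unit_circle p /\ on_unit_circle q /\ a = (p + s * (q - p))%C.

Lemma chord_split_Re (s : R) (a p q : C) : chord_split s a p q ->
  2 * (1 - s) * Re (Cconj a * p) = Cmod a ^ 2 + (1 - s) ^ 2 - s ^ 2.
Proof.
  intros (Hp & Hq & ->).
  replace ((1 - s) ^ 2) with ((1 - s) ^ 2 * Cmod p ^ 2) by (rewrite Hp; ring).
  replace (s ^ 2) with (s ^ 2 * Cmod q ^ 2) by (rewrite Hq; ring).
  rewrite !Cmod2_alt. destruct p, q. simpl. ring.
Qed.

Section ChordSplit.

Variable s : R.
Hypothesis s_bounds : 0 < s < 1.

Lemma chord_split_Re_eq (a p1 q1 p2 q2 : C) :
  chord_split s a p1 q1 -> chord_split s a p2 q2 ->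
  Re (Cconj a * p1) = Re (Cconj a * p2).
Proof.
  intros H1 H2. apply (Rmult_eq_reg_l (2 * (1 - s))); [| lra].
  rewrite (chord_split_Re _ _ _ _ H1), (chord_split_Re _ _ _ _ H2). reflexivity.
Qed.

Lemma chord_split_Im_sq (a p1 q1 p2 q2 : C) :
  chord_split s a p1 q1 -> chord_split s a p2 q2 ->
  Im (Cconj a * p1) ^ 2 = Im (Cconj a * p2) ^ 2.
Proof.
  intros H1 H2.
  assert (Hmod : forall p q, chord_split s a p q -> Cmod (Cconj a * p) ^ 2 = Cmod a ^ 2).
  { intros p q (Hp & _). rewrite Cmod_mult, Cmod_conj, Hp. ring. }
  pose proof (Hmod _ _ H1) as E1. pose proof (Hmod _ _ H2) as E2.
  rewrite Cmod2_alt, (chord_split_Re_eq _ _ _ _ _ H1 H2) in E1.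
  rewrite Cmod2_alt in E2. lra.
Qed.

Lemma chord_split_unique (a p1 q1 p2 q2 : C) : a <> 0%C ->
  chord_split s a p1 q1 -> chord_split s a p2 q2 ->
  Im (Cconj a * p1) = Im (Cconj a * p2) -> p1 = p2 /\ q1 = q2.
Proof.
  intros Ha H1 H2 HIm.
  assert (Hw : (Cconj a * p1)%C = (Cconj a * p2)%C).
  { apply injective_projections; [exact (chord_split_Re_eq _ _ _ _ _ H1 H2) | exact HIm]. }
  assert (Hca : Cconj a <> 0%C).
  { intros E. apply Ha, Cmod_eq_0. rewrite <- Cmod_conj, E. exact Cmod_0. }
  assert (Hp : p1 = p2).
  { replace p1 with (/ Cconj a * (Cconj a * p1))%C by (field; exact Hca).
    rewrite Hw. field. exact Hca. }
  subst p2. split; [reflexivity |].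
  assert (Hs : RtoC s <> 0%C) by (intros E; injection E; lra).
  destruct H1 as (_ & _ & E1), H2 as (_ & _ & E2).
  replace q1 with (p1 + / s * (a - p1))%C by (rewrite E1; field; exact Hs).
  rewrite E2. field. exact Hs.
Qed.

End ChordSplit.

Lemma golden_pos : 0 < golden.
Proof. unfold golden. pose proof (sqrt_pos 5). lra. Qed.

Definition golden_frac : R := 1 / (1 + golden).

Lemma golden_frac_bounds : 0 < golden_frac < 1.
Proof.
  pose proof golden_pos. unfold golden_frac. split.
  - apply Rdiv_lt_0_compat; lra.
  - apply (Rmult_lt_reg_r (1 + golden)); [lra |]. field_simplify; lra.
Qed.

Lemma golden_frac_ratio : (1 - golden_frac) / golden_frac = golden.
Proof. pose proof golden_pos. unfold golden_frac. field. lra. Qed.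

Lemma golden_chord_split (a z1 z2 : C) : Cmod a < 1 -> golden_chord a z1 z2 ->
  exists p q, same_segment z1 z2 p q /\ chord_split golden_frac a p q.
Proof.
  intros Ha (Hz1 & Hz2 & (t & Ht & Ea) & Hratio).
  assert (Hd1 : 0 < Cmod (z1 - a)%C).
  { pose proof (Cmod_sub_ge z1 a). unfold on_unit_circle in Hz1. lra. }
  assert (Hd2 : 0 < Cmod (z2 - a)%C).
  { pose proof (Cmod_sub_ge z2 a). unfold on_unit_circle in Hz2. lra. }
  subst a. destruct (segment_point_dist z1 z2 t Ht) as [D1 D2].
  set (d := Cmod (z2 - z1)%C) in *.
  rewrite D1 in Hd1, Hratio. rewrite D2 in Hd2, Hratio.
  assert (0 < d) by nra. assert (0 < t) by nra. assert (0 < 1 - t) by nra.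
  destruct Hratio as [Hr | Hr].
  - replace ((1 - t) * d / (t * d)) with ((1 - t) / t) in Hr by (field; lra).
    apply segment_param_of_ratio in Hr; [| lra]. fold golden_frac in Hr. subst t.
    exists z1, z2. split; [left; split; reflexivity | repeat split; assumption].
  - replace (t * d / ((1 - t) * d)) with ((1 - (1 - t)) / (1 - t)) in Hr by (field; lra).
    apply segment_param_of_ratio in Hr; [| lra]. fold golden_frac in Hr.
    exists z2, z1. split; [right; split; reflexivity | repeat split; try assumption].
    replace t with (1 - golden_frac) by lra. rewrite RtoC_minus. ring.
Qed.

Lemma golden_point_golden_chord (z1 z2 : C) :
  on_unit_circle z1 -> on_unit_circle z2 -> z1 <> z2 ->
  golden_chord (z1 + golden_frac * (z2 - z1))%C z1 z2.
Proof.
  intros H1 H2 Hne. pose proof golden_frac_bounds as Hs.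
  pose proof (Cmod_sub_gt_0 z2 z1 (not_eq_sym Hne)) as Hd.
  repeat split; try assumption.
  - exists golden_frac. split; [lra | reflexivity].
  - left. destruct (segment_point_dist z1 z2 golden_frac) as [D1 D2]; [lra |].
    rewrite D1, D2, <- golden_frac_ratio. field. lra.
Qed.

Lemma golden_chord_at_height (y : R) : 0 < y < 1 ->
  exists a, Im a = y /\ admissible a /\ exists z1 z2, golden_chord a z1 z2.
Proof.
  intros Hy. set (x := sqrt (1 - y ^ 2)).
  assert (Hx : 0 < x) by (apply sqrt_lt_R0; nra).
  assert (Hx2 : x ^ 2 = 1 - y ^ 2) by (apply pow2_sqrt; nra).
  set (z1 := (- x, y) : C). set (z2 := (x, y) : C).
  assert (Hz1 : on_unit_circle z1) by (apply on_unit_circle_iff; simpl; nra).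
  assert (Hz2 : on_unit_circle z2) by (apply on_unit_circle_iff; simpl; nra).
  assert (Hne : z1 <> z2) by (intros E; injection E; lra).
  pose proof golden_frac_bounds.
  assert (HIm : Im (z1 + golden_frac * (z2 - z1))%C = y) by (simpl; ring).
  exists (z1 + golden_frac * (z2 - z1))%C. split; [exact HIm | split].
  - split.
    + intros E. rewrite E in HIm. simpl in HIm. lra.
    + apply segment_point_lt_1; assumption.
  - exists z1, z2. apply golden_point_golden_chord; assumption.
Qed.

Lemma infinitely_many_golden_points :
  ~ exists l : list C, forall a : C,
      admissible a -> (exists z1 z2 : C, golden_chord a z1 z2) -> In a l.
Proof.
  intros [l Hl].
  destruct (exists_not_In_open_interval (map Im l) 0 1) as (y & Hy & Hny); [lra |].
  destruct (golden_chord_at_height y Hy) as (a & <- & Ha & Hch).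
  apply Hny, in_map, Hl; assumption.
Qed.

Lemma at_most_two_golden_chords (a : C) : admissible a ->
  forall z1 z2 w1 w2 v1 v2 : C,
    golden_chord a z1 z2 -> golden_chord a w1 w2 -> golden_chord a v1 v2 ->
    same_segment z1 z2 w1 w2 \/ same_segment z1 z2 v1 v2 \/ same_segment w1 w2 v1 v2.
Proof.
  intros [Ha0 Ha1] z1 z2 w1 w2 v1 v2 G1 G2 G3.
  destruct (golden_chord_split a z1 z2 Ha1 G1) as (p1 & q1 & S1 & P1).
  destruct (golden_chord_split a w1 w2 Ha1 G2) as (p2 & q2 & S2 & P2).
  destruct (golden_chord_split a v1 v2 Ha1 G3) as (p3 & q3 & S3 & P3).
  pose proof golden_frac_bounds as Hs.
  destruct (pow2_eq_pigeonhole _ _ _ (chord_split_Im_sq _ Hs _ _ _ _ _ P1 P2)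
                                     (chord_split_Im_sq _ Hs _ _ _ _ _ P1 P3))
    as [E | [E | E]].
  - left. destruct (chord_split_unique _ Hs _ _ _ _ _ Ha0 P1 P2 E) as [<- <-].
    eapply same_segment_trans; eassumption.
  - right; left. destruct (chord_split_unique _ Hs _ _ _ _ _ Ha0 P1 P3 E) as [<- <-].
    eapply same_segment_trans; eassumption.
  - right; right. destruct (chord_split_unique _ Hs _ _ _ _ _ Ha0 P2 P3 E) as [<- <-].
    eapply same_segment_trans; eassumption.
Qed.

Theorem theorem1 :
  (* infinitely many admissible a admit a golden chord *)
  (~ exists l : list C, forall a : C,
        admissible a -> (exists z1 z2 : C, golden_chord a z1 z2) -> In a l)
  /\
  (* for each admissible a, at most two golden chords *)
  (forall a : C, admissible a ->
     forall z1 z2 w1 w2 v1 v2 : C,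
       golden_chord a z1 z2 -> golden_chord a w1 w2 -> golden_chord a v1 v2 ->
       same_segment z1 z2 w1 w2 \/ same_segment z1 z2 v1 v2 \/
       same_segment w1 w2 v1 v2).
Proof. split; [exact infinitely_many_golden_points | exact at_most_two_golden_chords]. Qed.
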